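(* Let $T$ be a finite tree with at least two vertices, $\mathbb{K}$ a field, $\boldsymbol{\alpha}=(\alpha_t)_{t\in T}$ a family of invertible elements of $\mathbb{K}$, $f$ a leaf of $T$ and $g$ its unique neighbor. Let $T'$ be the tree obtained by removing $f$, and for $\beta\in\mathbb{K}^*$ let $\boldsymbol{\alpha}'(\beta)$ be the family on $T'$ with $\alpha'_g(\beta)=\alpha_g\beta$ and $\alpha'_s(\beta)=\alpha_s$ for $s\neq g$. Let $T''$ be the forest obtained by removing $f$ and $g$, and let $\boldsymbol{\alpha}''$ be the family on $T''$ with $\alpha''_s=-\alpha_s/\alpha_f$ if $s$ is adjacent to $g$ in $T$, and $\alpha''_s=\alpha_s$ otherwise. Then $X_T(\boldsymbol{\alpha})$ is the disjoint union of a closed part (where $x_f=0$) isomorphic to $\mathbb{A}^1\times X_{T''}(\boldsymbol{\alpha}'')$ and an open part (where $x_f\neq 0$) which is fibered over $\mathbb{A}^1\setminus\{0\}$ (via $x_f$) with fiber over $\beta$ isomorphic to $X_{T'}(\boldsymbol{\alpha}'(\beta))$.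
   Context: For a finite tree $T$ write $s-t$ when vertices are adjacent. For a family $\boldsymbol{\alpha}=(\alpha_t)_{t\in T}$ of elements of $\mathbb{K}$, $X_T(\boldsymbol{\alpha})$ is the affine scheme over $\mathbb{K}$ with coordinates $x_t,x'_t$ ($t\in T$) defined by $x_t x'_t = 1+\alpha_t\prod_{s-t} x_s$ for all vertices $t$. For a disjoint union of trees $F$, $X_F$ is the product of the schemes associated with the connected components (and is a point if $F$ is empty). *)

(* Affine schemes are represented by their functor of points
   on commutative K-algebras; isomorphisms by natural bijections (Yoneda). *)
From HB Require Import structures.
From mathcomp Require Import all_boot all_order all_algebra.
Set Implicit Arguments. Unset Strict Implicit. Unset Printing Implicit Defensive.
Import GRing.Theory.
Local Open Scope ring_scope.

Definition is_tree (T : finType) (e : rel T) : Prop :=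
  symmetric e /\ irreflexive e /\ (forall x y : T, connect e x y) /\
  (forall c : seq T, uniq c -> (3 <= size c)%N -> ~~ cycle e c).

(* Points of X_V(a) with values in a K-algebra A.  Coordinates are indexed by
   V + V : inl t is x_t, inr t is x'_t.  For a forest this is literally the
   product of the schemes of its components (equations only involve neighbours). *)
Definition Xeq (K : fieldType) (V : finType) (e : rel V) (a : V -> K)
    (A : comAlgType K) (v : V + V -> A) : Prop :=
  forall t : V, v (inl t) * v (inr t) = 1 + a t *: \prod_(s | e t s) v (inl s).

Definition scheme_iso (K : fieldType) (I J : Type)
    (P : forall A : comAlgType K, (I -> A) -> Prop)
    (Q : forall A : comAlgType K, (J -> A) -> Prop) : Prop :=
  exists (phi : forall A : comAlgType K, (I -> A) -> (J -> A))
         (psi : forall A : comAlgType K, (J -> A) -> (I -> A)),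
    [/\ (forall A v, P A v -> Q A (phi A v)),
        (forall A w, Q A w -> P A (psi A w)),
        (forall A v, P A v -> psi A (phi A v) = v),
        (forall A w, Q A w -> phi A (psi A w) = w) &
        (forall (A B : comAlgType K) (h : {lrmorphism A -> B}) v,
            P A v -> phi B (h \o v) = h \o phi A v)].

Notation Tprime f := {t | t != f}.
Notation Tsecond f g := {t | (t != f) && (t != g)}.

Definition e' (T : finType) (e : rel T) (f : T) : rel (Tprime f) :=
  fun x y => e (val x) (val y).
Definition e'' (T : finType) (e : rel T) (f g : T) : rel (Tsecond f g) :=
  fun x y => e (val x) (val y).

Definition alpha' (K : fieldType) (T : finType) (f g : T) (a : T -> K) (beta : K)
  (s : Tprime f) : K :=
  if val s == g then a g * beta else a (val s).

Definition alpha'' (K : fieldType) (T : finType) (e : rel T) (f g : T) (a : T -> K)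
  (s : Tsecond f g) : K :=
  if e g (val s) then - a (val s) / a f else a (val s).

Arguments e' {T} e f.
Arguments e'' {T} e f g.
Arguments alpha' {K T} f g a beta s.
Arguments alpha'' {K T} e f g a s.

(* The variable x_f enters only two equations: its own,
   x_f x'_f = 1 + alpha_f x_g, and the one at g, where it is a factor of the
   product.  When x_f = beta is invertible, the first equation determines
   x'_f = beta^-1 (1 + alpha_f x_g), and in the second x_f only rescales
   alpha_g by beta.  When x_f = 0, the first equation forces x_g = -1/alpha_f,
   then the one at g forces x'_g = -alpha_f; substituting x_g in the equations
   at the other neighbours s of g turns alpha_s into -alpha_s/alpha_f, while
   x'_f is free and gives the factor A^1.  Both isomorphisms forget or
   recompute coordinates by these formulas, hence are natural in the
   coefficient algebra. *)
From mathcomp Require Import all_boot all_algebra.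
From Stdlib Require Import FunctionalExtensionality.
Import GRing.Theory.
Set Implicit Arguments. Unset Strict Implicit.
Local Open Scope ring_scope.

Section Restriction.
Variables (T : finType) (P : pred T).

Definition sum_val (i : {x | P x} + {x | P x}) : T + T :=
  match i with inl t => inl (val t) | inr t => inr (val t) end.

Definition extend (A : Type) (w : {x | P x} -> A) (d : T -> A) (t : T) : A :=
  if insub t is Some u then w u else d t.

Lemma extend_val A (w : {x | P x} -> A) d u : extend w d (val u) = w u.
Proof. by rewrite /extend valK. Qed.

Lemma extend_eq A (w : {x | P x} -> A) (x d : T -> A) t :
  (forall u, w u = x (val u)) -> (~~ P t -> x t = d t) -> extend w d t = x t.
Proof. by move=> wx; rewrite /extend; case: insubP => [u _ <-|Pt ->]. Qed.

Lemma extend_out A (w : {x | P x} -> A) d t : ~~ P t -> extend w d t = d t.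
Proof. by move=> Pt; rewrite /extend insubN. Qed.

Lemma big_sig_cond (R : Type) (idx : R) (op : Monoid.com_law idx)
    (Q : pred T) (F : T -> R) :
  \big[op/idx]_(x : {x | P x} | Q (val x)) F (val x) =
  \big[op/idx]_(t | P t && Q t) F t.
Proof. exact: (esym (big_sub_cond (mem P) Q F)). Qed.

End Restriction.

Arguments sum_val {T P}.
Arguments extend {T P A}.

Lemma prodr_zero_factor (R : comPzSemiRingType) (I : finType) (P : pred I)
    (F : I -> R) i :
  P i -> F i = 0 -> \prod_(j | P j) F j = 0.
Proof. by move=> Pi Fi0; rewrite (bigD1 i) //= Fi0 mul0r. Qed.

Section LeafNeighbours.
Variables (T : finType) (e : rel T) (f g : T).
Hypotheses (e_sym : symmetric e) (e_fg : e f g) (leaf_f : forall s, e f s -> s = g).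

Lemma leaf_neq : irreflexive e -> f != g.
Proof. by move=> e_irr; apply: contraTneq e_fg => ->; rewrite e_irr. Qed.

Lemma prod_nbr_leaf (R : comPzSemiRingType) (F : T -> R) :
  \prod_(u | e f u) F u = F g.
Proof. by apply: big_pred1 => u; apply/idP/eqP => [/leaf_f|->]. Qed.

Lemma prod_nbr_Tprime (R : comPzSemiRingType) (F : T -> R) s : s != f ->
  \prod_(u | e s u) F u =
  (if s == g then F f else 1) * \prod_(u : Tprime f | e s (val u)) F (val u).
Proof.
move=> sf; rewrite big_sig_cond.
case: (eqVneq s g) => [->|sg].
  rewrite (bigD1 f) 1?e_sym //; congr (_ * _).
  by apply: eq_bigl => u; rewrite andbC.
rewrite mul1r; apply: eq_bigl => u /=.
case: (eqVneq u f) => [->|_] //=.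
by apply: contraNF sg; rewrite e_sym => /leaf_f ->.
Qed.

Lemma prod_nbr_Tsecond (R : comPzSemiRingType) (F : T -> R) s : s != f -> s != g ->
  \prod_(u | e s u) F u =
  (if e s g then F g else 1) * \prod_(u : Tsecond f g | e s (val u)) F (val u).
Proof.
move=> sf sg; rewrite big_sig_cond.
have esf : e s f = false by apply: contraNF sg; rewrite e_sym => /leaf_f ->.
case esg: (e s g); last rewrite mul1r.
  rewrite (bigD1 g) //; congr (_ * _); apply: eq_bigl => u /=.
  by case: (eqVneq u f) => [->|]; rewrite ?esf // andbC.
apply: eq_bigl => u /=.
case: (eqVneq u f) => [->|_]; first by rewrite esf.
by case: (eqVneq u g) => [->|_]; rewrite ?esg ?andbT.
Qed.

End LeafNeighbours.

Lemma scalerA_if_algl (R : pzRingType) (A : lalgType R) (b : bool) (c k : R) (x : A) :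
  k *: ((if b then c%:A else 1) * x) = (if b then k * c else k) *: x.
Proof. by case: b; rewrite ?mul1r // mulr_algl scalerA. Qed.

Section OpenPart.
Variables (K : fieldType) (T : finType) (e : rel T) (a : T -> K) (f g : T) (beta : K).
Hypotheses (e_sym : symmetric e) (e_fg : e f g) (leaf_f : forall s, e f s -> s = g).
Hypothesis beta_neq0 : beta != 0.

Definition open_restrict (A : comAlgType K) (v : T + T -> A) :
    Tprime f + Tprime f -> A :=
  v \o sum_val.

Definition open_extend (A : comAlgType K) (w : Tprime f + Tprime f -> A) :
    T + T -> A :=
  let x := extend (fun u => w (inl u)) (fun=> beta%:A) in
  let x' := extend (fun u => w (inr u)) (fun=> beta^-1 *: (1 + a f *: x g)) in
  fun i => match i with inl t => x t | inr t => x' t end.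

Lemma open_restrictP A v : Xeq e a v -> v (inl f) = beta%:A ->
  Xeq (e' e f) (alpha' f g a beta) (open_restrict (A:=A) v).
Proof.
move=> Xv vf t; rewrite /= Xv (prod_nbr_Tprime e_sym e_fg leaf_f) ?(valP t) //=.
rewrite vf scalerA_if_algl.
by rewrite /alpha' /e' /=; case: ifP => [/eqP->|].
Qed.

Section OpenExtend.
Variables (A : comAlgType K) (w : Tprime f + Tprime f -> A).

Lemma open_extend_inl_f : open_extend w (inl f) = beta%:A.
Proof. by rewrite /= extend_out ?eqxx. Qed.

Lemma open_extend_inr_f :
  open_extend w (inr f) = beta^-1 *: (1 + a f *: open_extend w (inl g)).
Proof. by rewrite /= extend_out ?eqxx. Qed.

Lemma open_extend_inl_val u : open_extend w (inl (val u)) = w (inl u).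
Proof. exact: extend_val. Qed.

Lemma open_extend_inr_val u : open_extend w (inr (val u)) = w (inr u).
Proof. exact: extend_val. Qed.

End OpenExtend.

Lemma open_extendP A w : Xeq (e' e f) (alpha' f g a beta) w ->
  Xeq e a (open_extend (A:=A) w) /\ open_extend w (inl f) = beta%:A.
Proof.
move=> Xw; split=> [t|]; last exact: open_extend_inl_f.
case: (eqVneq t f) => [->|tf].
  rewrite open_extend_inl_f open_extend_inr_f (prod_nbr_leaf e_fg leaf_f).
  by rewrite mulr_algl scalerA mulfV ?scale1r.
set u : Tprime f := Sub t tf; rewrite -[t]/(val u).
rewrite open_extend_inl_val open_extend_inr_val Xw.
rewrite (prod_nbr_Tprime e_sym e_fg leaf_f) ?(valP u) //.
rewrite open_extend_inl_f scalerA_if_algl.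
congr (1 + _ *: _); last by apply: eq_bigr => s _; rewrite open_extend_inl_val.
by rewrite /alpha' /=; case: ifP => [/eqP->|].
Qed.

Lemma open_extendK A v : Xeq e a v -> v (inl f) = beta%:A ->
  open_extend (open_restrict (A:=A) v) = v.
Proof.
move=> Xv vf.
have x_ext t :
    extend (fun u => open_restrict v (inl u)) (fun=> beta%:A) t = v (inl t).
  by apply: (extend_eq (x := fun t => v (inl t))) => // /negPn /eqP ->.
apply: functional_extensionality => -[t|t] /=; first exact: x_ext.
apply: (extend_eq (x := fun t => v (inr t))) => // /negPn /eqP ->.
have := Xv f; rewrite vf (prod_nbr_leaf e_fg leaf_f) x_ext mulr_algl => <-.
by rewrite scalerA mulVf ?scale1r.
Qed.

Lemma open_restrictK A w : open_restrict (open_extend (A:=A) w) = w.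
Proof. by apply: functional_extensionality => -[u|u] /=; exact: extend_val. Qed.

Lemma open_iso : scheme_iso
    (fun A (v : T + T -> A) => Xeq e a v /\ v (inl f) = beta%:A)
    (fun A (w : Tprime f + Tprime f -> A) => Xeq (e' e f) (alpha' f g a beta) w).
Proof.
exists open_restrict, open_extend; split.
- by move=> A v [Xv vf]; apply: open_restrictP.
- by move=> A w; apply: open_extendP.
- by move=> A v [Xv vf]; apply: open_extendK.
- by move=> A w _; apply: open_restrictK.
- by [].
Qed.

End OpenPart.

Section ClosedPart.
Variables (K : fieldType) (T : finType) (e : rel T) (a : T -> K) (f g : T).
Hypotheses (e_sym : symmetric e) (e_irr : irreflexive e).
Hypotheses (e_fg : e f g) (leaf_f : forall s, e f s -> s = g) (a_f_neq0 : a f != 0).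

Definition closed_restrict (A : comAlgType K) (v : T + T -> A) :
    option (Tsecond f g + Tsecond f g) -> A :=
  oapp (v \o sum_val) (v (inr f)).

Definition closed_extend (A : comAlgType K)
    (w : option (Tsecond f g + Tsecond f g) -> A) : T + T -> A :=
  let x := extend (fun u => w (Some (inl u)))
                  (fun t => if t == f then 0 else (- (a f)^-1)%:A) in
  let x' := extend (fun u => w (Some (inr u)))
                   (fun t => if t == f then w None else (- a f)%:A) in
  fun i => match i with inl t => x t | inr t => x' t end.

Let g_neq_f : g != f. Proof. by rewrite eq_sym (leaf_neq e_fg e_irr). Qed.
Let e_gf : e g f. Proof. by rewrite e_sym. Qed.

Lemma zero_leaf_nbr (A : comAlgType K) (v : T + T -> A) :
  Xeq e a v -> v (inl f) = 0 ->
  v (inl g) = (- (a f)^-1)%:A /\ v (inr g) = (- a f)%:A.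
Proof.
move=> Xv vf.
have vg : v (inl g) = (- (a f)^-1)%:A.
  have := Xv f; rewrite vf mul0r (prod_nbr_leaf e_fg leaf_f) => /esym/eqP.
  rewrite addrC addr_eq0 => /eqP vg; rewrite -(scalerK a_f_neq0 (v (inl g))) vg.
  by rewrite scalerN -scaleNr.
split=> //; have := Xv g.
rewrite (prodr_zero_factor e_gf vf) scaler0 addr0 vg mulr_algl => vg'.
have nz : - (a f)^-1 != 0 by rewrite oppr_eq0 invr_eq0.
by rewrite -(scalerK nz (v (inr g))) vg' invrN invrK.
Qed.

Lemma closed_restrictP A v : Xeq e a v -> v (inl f) = 0 ->
  Xeq (e'' e f g) (alpha'' e f g a) (fun i => closed_restrict (A:=A) v (Some i)).
Proof.
move=> Xv vf t; have [vg _] := zero_leaf_nbr Xv vf; have /andP[tf tg] := valP t.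
rewrite /= Xv (prod_nbr_Tsecond e_sym leaf_f) // vg scalerA_if_algl.
by rewrite /alpha'' /e'' /= (e_sym g); case: ifP; rewrite ?mulrN ?mulNr.
Qed.

Section ClosedExtend.
Variables (A : comAlgType K) (w : option (Tsecond f g + Tsecond f g) -> A).

Lemma closed_extend_inl_f : closed_extend w (inl f) = 0.
Proof. by rewrite /= extend_out ?eqxx. Qed.

Lemma closed_extend_inl_g : closed_extend w (inl g) = (- (a f)^-1)%:A.
Proof. by rewrite /= extend_out ?eqxx ?andbF // (negbTE g_neq_f). Qed.

Lemma closed_extend_inr_g : closed_extend w (inr g) = (- a f)%:A.
Proof. by rewrite /= extend_out ?eqxx ?andbF // (negbTE g_neq_f). Qed.

Lemma closed_extend_inl_val u : closed_extend w (inl (val u)) = w (Some (inl u)).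
Proof. exact: extend_val. Qed.

Lemma closed_extend_inr_val u : closed_extend w (inr (val u)) = w (Some (inr u)).
Proof. exact: extend_val. Qed.

End ClosedExtend.

Lemma closed_extendP A w : Xeq (e'' e f g) (alpha'' e f g a) (fun i => w (Some i)) ->
  Xeq e a (closed_extend (A:=A) w) /\ closed_extend w (inl f) = 0.
Proof.
move=> Xw; split=> [t|]; last exact: closed_extend_inl_f.
case: (eqVneq t f) => [->|tf].
  rewrite closed_extend_inl_f mul0r (prod_nbr_leaf e_fg leaf_f) closed_extend_inl_g.
  by rewrite scalerA mulrN mulfV // scaleN1r subrr.
case: (eqVneq t g) => [->|tg].
  rewrite closed_extend_inl_g closed_extend_inr_g.
  have xf := closed_extend_inl_f w.
  rewrite (prodr_zero_factor (F := fun s => closed_extend w (inl s)) e_gf xf).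
  by rewrite scaler0 addr0 mulr_algl scalerA mulrNN mulVf ?scale1r.
have tfg : (t != f) && (t != g) by rewrite tf tg.
set u : Tsecond f g := Sub t tfg; rewrite -[t]/(val u).
rewrite closed_extend_inl_val closed_extend_inr_val Xw.
rewrite (prod_nbr_Tsecond e_sym leaf_f) ?(valP u) //.
rewrite closed_extend_inl_g scalerA_if_algl.
congr (1 + _ *: _); last by apply: eq_bigr => s _; rewrite closed_extend_inl_val.
by rewrite /alpha'' /= (e_sym g); case: ifP; rewrite ?mulrN ?mulNr.
Qed.

Lemma closed_extendK A v : Xeq e a v -> v (inl f) = 0 ->
  closed_extend (closed_restrict (A:=A) v) = v.
Proof.
move=> Xv vf; have [vg vg'] := zero_leaf_nbr Xv vf.
apply: functional_extensionality => -[t|t] /=.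
  apply: (extend_eq (x := fun t => v (inl t))) => //.
  by rewrite negb_and !negbK => /orP[] /eqP->; rewrite ?eqxx ?(negbTE g_neq_f).
apply: (extend_eq (x := fun t => v (inr t))) => //.
by rewrite negb_and !negbK => /orP[] /eqP->; rewrite ?eqxx ?(negbTE g_neq_f).
Qed.

Lemma closed_restrictK A w : closed_restrict (closed_extend (A:=A) w) = w.
Proof.
apply: functional_extensionality => -[[u|u]|] /=; try exact: extend_val.
by rewrite extend_out ?eqxx.
Qed.

Lemma closed_iso : scheme_iso
    (fun A (v : T + T -> A) => Xeq e a v /\ v (inl f) = 0)
    (fun A (w : option (Tsecond f g + Tsecond f g) -> A) =>
       Xeq (e'' e f g) (alpha'' e f g a) (fun i => w (Some i))).
Proof.
exists closed_restrict, closed_extend; split.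
- by move=> A v [Xv vf]; apply: closed_restrictP.
- by move=> A w; apply: closed_extendP.
- by move=> A v [Xv vf]; apply: closed_extendK.
- by move=> A w _; apply: closed_restrictK.
- by move=> A B h v _; apply: functional_extensionality => -[[u|u]|].
Qed.

End ClosedPart.

Theorem mainTheorem4 (K : fieldType) (T : finType) (e : rel T) (a : T -> K)
    (f g : T) :
  is_tree e -> (1 < #|T|)%N -> (forall t, a t != 0) ->
  e f g -> (forall s, e f s -> s = g) ->
  scheme_iso
    (fun A (v : T + T -> A) => Xeq e a v /\ v (inl f) = 0)
    (fun A (w : option (Tsecond f g + Tsecond f g) -> A) =>
       Xeq (e'' e f g) (alpha'' e f g a)
           (fun i => w (Some i)))
  /\
  (forall beta : K, beta != 0 ->
   scheme_iso
    (fun A (v : T + T -> A) => Xeq e a v /\ v (inl f) = beta%:A)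
    (fun A (w : Tprime f + Tprime f -> A) =>
       Xeq (e' e f) (alpha' f g a beta) w)).
Proof.
move=> [e_sym [e_irr _]] _ a_neq0 e_fg leaf_f; split.
  exact: closed_iso e_sym e_irr e_fg leaf_f (a_neq0 f).
by move=> beta beta_neq0; apply: open_iso.
Qed.
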